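(* Let $G = K_{m_1} \otimes \cdots \otimes K_{m_t}$ with $m_i \geq 3$ for all $i$, and let $W$ be a resolving set of $G$. Then for every $1 \le i \le t$, $|V(K_{m_i}) \setminus W(i)| \leq 1$.
   Context: $K_r$ is the complete graph on $r$ vertices. The tensor product of graphs has vertex set the Cartesian product of vertex sets, with $(a_1,\dots,a_t)$ adjacent to $(b_1,\dots,b_t)$ iff $a_ib_i$ is an edge of the $i$-th factor for every $i$. For $T \subseteq A_1\times\cdots\times A_t$, $T(i)\subseteq A_i$ denotes the set of elements of $A_i$ appearing as the $i$-th coordinate of some element of $T$. For a connected graph and an ordered set $W=\{w_1,\dots,w_k\}$ of vertices, $r(v\mid W)=(d(v,w_1),\dots,d(v,w_k))$; $W$ is a resolving set if distinct vertices have distinct representations. *)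

From mathcomp Require Import all_boot.
Set Implicit Arguments. Unset Strict Implicit. Unset Printing Implicit Defensive.

Fixpoint walk_le (T : finType) (e : rel T) (n : nat) (x y : T) : bool :=
  match n with
  | 0 => x == y
  | n'.+1 => walk_le e n' x y || [exists z, walk_le e n' x z && e z y]
  end.

(* Graph distance: the least n with a walk of length <= n from x to y.
   (A shortest walk has length < #|T|; for disconnected pairs the value
   defaults to #|T|, which never occurs in a connected graph.) *)
Definition gdist (T : finType) (e : rel T) (x y : T) : nat :=
  find (fun n => walk_le e n x y) (iota 0 #|T|).

Definition resolving (T : finType) (e : rel T) (W : {set T}) : Prop :=
  forall u v : T, (forall w, w \in W -> gdist e u w = gdist e v w) -> u = v.

Notation tvert m := {dffun forall i, 'I_(m i)}.

Definition complete_rel (r : nat) : rel 'I_r := fun a b => a != b.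

Definition tensor_complete_rel (t : nat) (m : 'I_t -> nat) : rel (tvert m) :=
  fun a b => [forall i, complete_rel (a i) (b i)].

Definition proj_set (t : nat) (m : 'I_t -> nat) (W : {set tvert m}) (i : 'I_t)
  : {set 'I_(m i)} := [set (w : tvert m) i | w in W].

(* Swapping two values a, b of the i-th coordinate is an automorphism of the
   tensor product of complete graphs. If neither a nor b occurs as an i-th
   coordinate of W, this automorphism fixes W pointwise, so it preserves all
   distances to W; a resolving set then forces it to be the identity, which it
   is not as soon as some vertex has i-th coordinate a. *)
From mathcomp Require Import all_boot fingroup perm.

Set Implicit Arguments.
Unset Strict Implicit.
Unset Printing Implicit Defensive.

Section GraphAutomorphism.

Variables (T : finType) (e : rel T) (s : {perm T}).
Hypothesis s_mono : {mono s : x y / e x y}.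

Lemma walk_le_perm (n : nat) (x y : T) :
  walk_le e n (s x) (s y) = walk_le e n x y.
Proof.
elim: n x y => [|n IHn] x y /=; first by rewrite (inj_eq perm_inj).
rewrite IHn; congr (_ || _).
apply/existsP/existsP => -[z /andP[wxz ezy]].
  by exists ((s^-1)%g z); rewrite -IHn -s_mono !permKV wxz ezy.
by exists (s z); rewrite IHn s_mono wxz ezy.
Qed.

Lemma gdist_perm (x y : T) : gdist e (s x) (s y) = gdist e x y.
Proof. by apply: eq_find => n; apply: walk_le_perm. Qed.

Lemma resolving_perm_fix (W : {set T}) :
  resolving e W -> {in W, s =1 id} -> s =1 id.
Proof.
move=> resW sW x; apply: resW => w wW.
by rewrite -{1}(sW w wW) gdist_perm.
Qed.

End GraphAutomorphism.

Section TensorCoordinatePerm.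

Variables (t : nat) (m : 'I_t -> nat) (i : 'I_t).

Definition tensor_coord_fun (s : {perm 'I_(m i)}) (x : tvert m) : tvert m :=
  [ffun j => dfwith x (s (x i)) j].

Lemma tensor_coord_fun_at (s : {perm 'I_(m i)}) (x : tvert m) :
  tensor_coord_fun s x i = s (x i).
Proof. by rewrite ffunE dfwith_in. Qed.

Lemma tensor_coord_funK (s : {perm 'I_(m i)}) :
  cancel (tensor_coord_fun s) (tensor_coord_fun s^-1%g).
Proof.
move=> x; apply/ffunP => j; rewrite [LHS]ffunE tensor_coord_fun_at permK.
by case: dfwithP => // k ik; rewrite ffunE dfwith_out.
Qed.

Definition tensor_coord_perm (s : {perm 'I_(m i)}) : {perm tvert m} :=
  perm (can_inj (tensor_coord_funK s)).

Lemma tensor_coord_perm_mono (s : {perm 'I_(m i)}) :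
  {mono tensor_coord_perm s : x y / tensor_complete_rel x y}.
Proof.
move=> x y; rewrite !permE; apply: eq_forallb => j; rewrite /complete_rel !ffunE.
by have [<-|ij] := eqVneq i j; rewrite ?dfwith_in ?dfwith_out ?(inj_eq perm_inj).
Qed.

Lemma tensor_coord_perm_fix (s : {perm 'I_(m i)}) (x : tvert m) :
  s (x i) = x i -> tensor_coord_perm s x = x.
Proof.
move=> sx; rewrite permE; apply/ffunP => j; rewrite ffunE sx.
by case: dfwithP.
Qed.

End TensorCoordinatePerm.

Lemma tvert_exists_coord (t : nat) (m : 'I_t -> nat) (i : 'I_t) (a : 'I_(m i)) :
  (forall j, 0 < m j) -> exists x : tvert m, x i = a.
Proof.
move=> m_gt0; pose x0 : tvert m := [ffun j => Ordinal (m_gt0 j)].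
by exists [ffun j => dfwith x0 a j]; rewrite ffunE dfwith_in.
Qed.

Theorem lemma2p2 (t : nat) (m : 'I_t -> nat) (W : {set tvert m}) :
  (forall i, 3 <= m i) ->
  resolving (@tensor_complete_rel t m) W ->
  forall i : 'I_t, #|[set: 'I_(m i)] :\: proj_set W i| <= 1.
Proof.
move=> m_ge3 resW i; rewrite leqNgt; apply/card_gt1P => -[a [b [aW bW ab]]].
move: aW bW; rewrite !inE !andbT => aW bW.
pose p := tensor_coord_perm (tperm a b).
have pW : {in W, p =1 id}.
  move=> w wW; apply: tensor_coord_perm_fix; apply: tpermD.
    by apply: contraNneq aW => ->; apply: imset_f.
  by apply: contraNneq bW => ->; apply: imset_f.
have p_id := resolving_perm_fix (tensor_coord_perm_mono (tperm a b)) resW pW.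
have [x xa] := tvert_exists_coord a (fun j => ltnW (ltnW (m_ge3 j))).
have := congr1 (fun y : tvert m => y i) (p_id x).
by rewrite /= permE tensor_coord_fun_at xa tpermL => ba; rewrite ba eqxx in ab.
Qed.
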